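(* Let $M$ be a timelike surface in $\mathbb{R}^{3,1}$ with a canonical null direction with respect to a constant unit spacelike vector $Z$, such that $II(Z^\top,Z^\top)\neq0$ everywhere. Then the normal curvature of $M$ is $$K_N=a\,|II(Z^\top,Z^\top)|.$$
   Context: $\mathbb{R}^{3,1}$ is $\mathbb{R}^{4}$ with the metric $-dx_1^2+dx_2^2+dx_3^2+dx_4^2$. A surface is timelike if the induced metric has signature $(1,1)$ (its normal bundle is then spacelike); a vector $v$ is lightlike if $v\ne0$ and $\langle v,v\rangle=0$. For a constant vector $Z$, $Z=Z^\top+Z^\perp$ along $M$; $M$ has a canonical null direction with respect to $Z$ if $Z^\top$ is lightlike everywhere on $M$. $W$ is the unique lightlike tangent field with $\langle Z^\top,W\rangle=-1$; $a:=\langle II(W,W),Z^\perp\rangle$ with $II$ the second fundamental form; $A_\xi$ is the shape operator, $\langle A_\xi X,Y\rangle=\langle II(X,Y),\xi\rangle$. Set $\nu:=II(Z^\top,Z^\top)/|II(Z^\top,Z^\top)|$ (a unit normal orthogonal to $Z^\perp$), $e_1=(Z^\top+W)/\sqrt2$, $e_2=(Z^\top-W)/\sqrt2$. The normal curvature is defined as $K_N:=\langle (A_{Z^\perp}\circ A_\nu-A_\nu\circ A_{Z^\perp})(e_1),e_2\rangle$. *)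

From Stdlib Require Import Reals.
Open Scope R_scope.

Record V4 := mkV4 { x1 : R; x2 : R; x3 : R; x4 : R }.

Definition vzero : V4 := mkV4 0 0 0 0.
Definition vadd (a b : V4) : V4 :=
  mkV4 (x1 a + x1 b) (x2 a + x2 b) (x3 a + x3 b) (x4 a + x4 b).
Definition vscal (c : R) (a : V4) : V4 :=
  mkV4 (c * x1 a) (c * x2 a) (c * x3 a) (c * x4 a).
Definition vsub (a b : V4) : V4 := vadd a (vscal (-1) b).

Definition mink (a b : V4) : R :=
  - x1 a * x1 b + x2 a * x2 b + x3 a * x3 b + x4 a * x4 b.

Definition vnorm (a : V4) : R := sqrt (mink a a).

Definition vderiv (c : R -> V4) (t : R) (d : V4) : Prop :=
  derivable_pt_lim (fun s => x1 (c s)) t (x1 d) /\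
  derivable_pt_lim (fun s => x2 (c s)) t (x2 d) /\
  derivable_pt_lim (fun s => x3 (c s)) t (x3 d) /\
  derivable_pt_lim (fun s => x4 (c s)) t (x4 d).

Definition is_pd_u (U : R -> R -> Prop) (g h : R -> R -> V4) : Prop :=
  forall u v, U u v -> vderiv (fun t => g t v) u (h u v).
Definition is_pd_v (U : R -> R -> Prop) (g h : R -> R -> V4) : Prop :=
  forall u v, U u v -> vderiv (fun t => g u t) v (h u v).

Definition open2 (U : R -> R -> Prop) : Prop :=
  forall u v, U u v -> exists eps, 0 < eps /\
    forall u' v', Rabs (u' - u) < eps -> Rabs (v' - v) < eps -> U u' v'.

(** Pointwise second-order data of a parametrization f at a point:
    fu = f_u, fv = f_v, fuu = f_uu, fuv = f_uv = f_vu, fvv = f_vv. *)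
Record Frame := mkFrame { fu : V4; fv : V4; fuu : V4; fuv : V4; fvv : V4 }.

Definition gE (fr : Frame) := mink (fu fr) (fu fr).
Definition gF (fr : Frame) := mink (fu fr) (fv fr).
Definition gG (fr : Frame) := mink (fv fr) (fv fr).
Definition gdet (fr : Frame) := gE fr * gG fr - gF fr * gF fr.

(** Timelike: the induced metric (2x2 symmetric) has signature (1,1),
    i.e. negative determinant. *)
Definition timelike_at (fr : Frame) : Prop := gdet fr < 0.

(** Tangent vectors are given by coordinates (c1,c2) in the basis f_u, f_v. *)
Definition tang (fr : Frame) (c : R * R) : V4 :=
  vadd (vscal (fst c) (fu fr)) (vscal (snd c) (fv fr)).

(** The tangent vector T with <T,f_u> = h1 and <T,f_v> = h2 (coordinates). *)
Definition raise (fr : Frame) (h1 h2 : R) : R * R :=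
  ((gG fr * h1 - gF fr * h2) / gdet fr, (- gF fr * h1 + gE fr * h2) / gdet fr).

(** Coordinates of the tangent part X^T of an ambient vector X. *)
Definition tcoord (fr : Frame) (X : V4) : R * R :=
  raise fr (mink X (fu fr)) (mink X (fv fr)).
Definition tproj (fr : Frame) (X : V4) : V4 := tang fr (tcoord fr X).
Definition nproj (fr : Frame) (X : V4) : V4 := vsub X (tproj fr X).

(** Second fundamental form: normal part of D_X Y for coordinate fields. *)
Definition II (fr : Frame) (a b : R * R) : V4 :=
  nproj fr (vadd (vscal (fst a * fst b) (fuu fr))
             (vadd (vscal (fst a * snd b + snd a * fst b) (fuv fr))
                   (vscal (snd a * snd b) (fvv fr)))).

(** Shape operator: <A_xi X, Y> = <II(X,Y), xi>. *)
Definition shape (fr : Frame) (xi : V4) (X : R * R) : R * R :=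
  raise fr (mink (II fr X (1, 0)) xi) (mink (II fr X (0, 1)) xi).

Definition csub (a b : R * R) : R * R := (fst a - fst b, snd a - snd b).

Definition Ztc (fr : Frame) (Z : V4) : R * R := tcoord fr Z.
Definition Zperp (fr : Frame) (Z : V4) : V4 := nproj fr Z.

Definition nuv (fr : Frame) (Z : V4) : V4 :=
  let h := II fr (Ztc fr Z) (Ztc fr Z) in vscal (/ vnorm h) h.

(** Normal curvature, given the coordinates w of W. *)
Definition KN (fr : Frame) (Z : V4) (w : R * R) : R :=
  let zt := Ztc fr Z in
  let e1 := ((fst zt + fst w) / sqrt 2, (snd zt + snd w) / sqrt 2) in
  let e2 := ((fst zt - fst w) / sqrt 2, (snd zt - snd w) / sqrt 2) in
  let zp := Zperp fr Z in
  let nu := nuv fr Z in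
  mink (tang fr (csub (shape fr zp (shape fr nu e1))
                      (shape fr nu (shape fr zp e1))))
       (tang fr e2).

Definition acoef (fr : Frame) (Z : V4) (w : R * R) : R :=
  mink (II fr w w) (Zperp fr Z).

From Stdlib Require Import Reals Lra.
Open Scope R_scope.

(* Differentiating <Z^T, Z^T> = 0 along the surface, with Z constant, shows that Z^T lies in
   the kernel of the symmetric form b(X, Y) = <II(X, Y), Z^perp>.  On a Lorentzian plane a
   symmetric form whose kernel contains the null vector T = Z^T is a multiple of T^flat (x)
   T^flat, and <T, W> = -1 identifies the factor as a = b(W, W).  Hence
   A_{Z^perp} X = a <T, X> T, and the commutator defining K_N collapses to
   a <II(T, T), nu> = a |II(T, T)|. *)

Record sym2 := Sym2 { s11 : R; s12 : R; s22 : R }.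

Definition sform (b : sym2) (X Y : R * R) : R :=
  fst X * fst Y * s11 b + (fst X * snd Y + snd X * fst Y) * s12 b + snd X * snd Y * s22 b.

Definition sdet (g : sym2) : R := s11 g * s22 g - s12 g * s12 g.

Definition sharp (g : sym2) (h1 h2 : R) : R * R :=
  ((s22 g * h1 - s12 g * h2) / sdet g, (- s12 g * h1 + s11 g * h2) / sdet g).

Definition sendo (g b : sym2) (X : R * R) : R * R :=
  sharp g (sform b X (1, 0)) (sform b X (0, 1)).

Lemma sform_sym b X Y : sform b X Y = sform b Y X.
Proof. unfold sform; ring. Qed.

Lemma sform_csub_l b X Y V : sform b (csub X Y) V = sform b X V - sform b Y V.
Proof. unfold sform, csub; cbn; ring. Qed.

Lemma sform_1_0 b X : sform b X (1, 0) = fst X * s11 b + snd X * s12 b.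
Proof. unfold sform; cbn; ring. Qed.

Lemma sform_0_1 b X : sform b X (0, 1) = fst X * s12 b + snd X * s22 b.
Proof. unfold sform; cbn; ring. Qed.

Lemma sform_scal_l b k X Y : sform b (k * fst X, k * snd X) Y = k * sform b X Y.
Proof. unfold sform; cbn; ring. Qed.

Lemma sform_sharp g h1 h2 Y :
  sdet g <> 0 -> sform g (sharp g h1 h2) Y = fst Y * h1 + snd Y * h2.
Proof. destruct g; unfold sform, sharp, sdet; cbn; intros Hg; field; exact Hg. Qed.

Lemma sform_sendo g b X Y : sdet g <> 0 -> sform g (sendo g b X) Y = sform b X Y.
Proof. intros Hg; unfold sendo; rewrite sform_sharp by exact Hg; unfold sform; cbn; ring. Qed.

Lemma perp_parallel x1 x2 l1 l2 t1 t2 w1 w2 :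
  t1 <> 0 \/ t2 <> 0 ->
  x1 * t1 + x2 * t2 = 0 -> l1 * t1 + l2 * t2 = 0 -> l1 * w1 + l2 * w2 = -1 ->
  x1 = - (x1 * w1 + x2 * w2) * l1 /\ x2 = - (x1 * w1 + x2 * w2) * l2.
Proof.
intros Ht Hx Hl Hw.
assert (Hcross : x1 * l2 = x2 * l1).
{ assert (E1 : l2 * (x1 * t1 + x2 * t2) = 0) by (rewrite Hx; ring).
  assert (E2 : x2 * (l1 * t1 + l2 * t2) = 0) by (rewrite Hl; ring).
  assert (E3 : l1 * (x1 * t1 + x2 * t2) = 0) by (rewrite Hx; ring).
  assert (E4 : x1 * (l1 * t1 + l2 * t2) = 0) by (rewrite Hl; ring).
  destruct Ht as [Ht | Ht]; [apply (Rmult_eq_reg_r t1) | apply (Rmult_eq_reg_r t2)]; lra. }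
assert (E1 : x1 * (l1 * w1 + l2 * w2) = - x1) by (rewrite Hw; ring).
assert (E2 : x2 * (l1 * w1 + l2 * w2) = - x2) by (rewrite Hw; ring).
assert (E3 : w1 * (x1 * l2) = w1 * (x2 * l1)) by (rewrite Hcross; ring).
assert (E4 : w2 * (x1 * l2) = w2 * (x2 * l1)) by (rewrite Hcross; ring).
split; lra.
Qed.

Lemma sform_rank_one g b T W :
  sform g T T = 0 -> sform g T W = -1 ->
  sform b T (1, 0) = 0 -> sform b T (0, 1) = 0 ->
  forall X Y, sform b X Y = sform b W W * sform g T X * sform g T Y.
Proof.
destruct g as [E F G], b as [p q r], T as [t1 t2], W as [w1 w2]; unfold sform; cbn.
intros HTT HTW Hb1 Hb2 [x1 x2] [y1 y2]; cbn.
set (l1 := t1 * E + t2 * F); set (l2 := t1 * F + t2 * G).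
assert (Hl : l1 * t1 + l2 * t2 = 0) by (unfold l1, l2; lra).
assert (Hw : l1 * w1 + l2 * w2 = -1) by (unfold l1, l2; lra).
assert (Ht : t1 <> 0 \/ t2 <> 0).
{ destruct (Req_dec t1 0) as [->|]; [|now left].
  destruct (Req_dec t2 0) as [->|]; [|now right]. exfalso; lra. }
destruct (perp_parallel p q l1 l2 t1 t2 w1 w2) as [Hp Hq]; try lra.
destruct (perp_parallel q r l1 l2 t1 t2 w1 w2) as [Hq' Hr]; try lra.
set (al := - (p * w1 + q * w2)) in *; set (be := - (q * w1 + r * w2)) in *.
set (a := w1 * w1 * p + (w1 * w2 + w2 * w1) * q + w2 * w2 * r).
assert (Ha : a = - (al * w1 + be * w2)) by (unfold a, al, be; ring).
assert (Hal : a * l1 = al).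
{ assert (Hw2 : w2 * (be * l1) = w2 * (al * l2)) by (rewrite <- Hq, <- Hq'; ring).
  assert (Hscal : al * (l1 * w1 + l2 * w2) = - al) by (rewrite Hw; ring).
  rewrite Ha; lra. }
assert (Hbe : a * l2 = be).
{ assert (Hw1 : w1 * (be * l1) = w1 * (al * l2)) by (rewrite <- Hq, <- Hq'; ring).
  assert (Hscal : be * (l1 * w1 + l2 * w2) = - be) by (rewrite Hw; ring).
  rewrite Ha; lra. }
clearbody a al be.
rewrite Hp, Hq, Hr, <- Hal, <- Hbe; unfold l1, l2; ring.
Qed.

Lemma sendo_rank_one g b T k X :
  sdet g <> 0 -> (forall X Y, sform b X Y = k * sform g T X * sform g T Y) ->
  sendo g b X = (k * sform g T X * fst T, k * sform g T X * snd T).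
Proof.
intros Hg Hb; unfold sendo, sharp; rewrite !Hb.
destruct g, T; unfold sform, sdet in *; cbn in *; f_equal; field; exact Hg.
Qed.

Lemma commutator_rank_one g b c T W :
  sdet g <> 0 -> sform g T T = 0 -> sform g T W = -1 ->
  (forall X Y, sform b X Y = sform b W W * sform g T X * sform g T Y) ->
  let e1 := ((fst T + fst W) / sqrt 2, (snd T + snd W) / sqrt 2) in
  let e2 := ((fst T - fst W) / sqrt 2, (snd T - snd W) / sqrt 2) in
  sform g (csub (sendo g b (sendo g c e1)) (sendo g c (sendo g b e1))) e2
  = sform b W W * sform c T T.
Proof.
intros Hg HTT HTW Hb e1 e2.
set (a := sform b W W) in *.
assert (Hs : sqrt 2 * sqrt 2 = 2) by (apply sqrt_sqrt; lra).
assert (Hs0 : sqrt 2 <> 0) by (apply Rgt_not_eq, sqrt_lt_R0; lra).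
assert (He1 : sform g T e1 = - / sqrt 2).
{ replace (sform g T e1) with ((sform g T T + sform g T W) / sqrt 2)
    by (unfold sform, e1; cbn; field; exact Hs0).
  rewrite HTT, HTW; field; exact Hs0. }
assert (He2 : sform g T e2 = / sqrt 2).
{ replace (sform g T e2) with ((sform g T T - sform g T W) / sqrt 2)
    by (unfold sform, e2; cbn; field; exact Hs0).
  rewrite HTT, HTW; field; exact Hs0. }
rewrite sform_csub_l, !sform_sendo by exact Hg.
rewrite Hb, (sform_sym g T (sendo g c e1)), sform_sendo by exact Hg.
rewrite (sendo_rank_one g b T a e1 Hg Hb), sform_scal_l, He1, He2.
transitivity (a * (sform c (fst T + fst W, snd T + snd W) T
                   + sform c T (fst T - fst W, snd T - snd W)) / (sqrt 2 * sqrt 2)).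
- unfold e1, e2, sform; cbn; field; exact Hs0.
- rewrite Hs; unfold sform; cbn; field.
Qed.

Definition metric (fr : Frame) : sym2 := Sym2 (gE fr) (gF fr) (gG fr).

Definition second_form (fr : Frame) (xi : V4) : sym2 :=
  Sym2 (mink (nproj fr (fuu fr)) xi) (mink (nproj fr (fuv fr)) xi) (mink (nproj fr (fvv fr)) xi).

Lemma mink_tang fr c d : mink (tang fr c) (tang fr d) = sform (metric fr) c d.
Proof. unfold tang, sform, metric, gE, gF, gG, vadd, vscal, mink; cbn; ring. Qed.

Lemma nproj_vadd fr A B : nproj fr (vadd A B) = vadd (nproj fr A) (nproj fr B).
Proof.
unfold nproj, tproj, tcoord, raise, tang, vsub, vadd, vscal, mink, Rdiv; cbn.
f_equal; ring.
Qed.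

Lemma nproj_vscal fr k A : nproj fr (vscal k A) = vscal k (nproj fr A).
Proof.
unfold nproj, tproj, tcoord, raise, tang, vsub, vadd, vscal, mink, Rdiv; cbn.
f_equal; ring.
Qed.

Lemma mink_vadd_l A B C : mink (vadd A B) C = mink A C + mink B C.
Proof. unfold mink, vadd; cbn; ring. Qed.

Lemma mink_vscal_l k A C : mink (vscal k A) C = k * mink A C.
Proof. unfold mink, vscal; cbn; ring. Qed.

Lemma mink_II fr X Y xi : mink (II fr X Y) xi = sform (second_form fr xi) X Y.
Proof.
unfold II; rewrite !nproj_vadd, !nproj_vscal, !mink_vadd_l, !mink_vscal_l.
unfold sform, second_form; cbn; ring.
Qed.

Lemma shape_sendo fr xi X : shape fr xi X = sendo (metric fr) (second_form fr xi) X.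
Proof. unfold shape, sendo; rewrite !mink_II; reflexivity. Qed.

(* The junk values [sqrt r = 0] for [r <= 0] and [/ 0 = 0] make this hold unconditionally. *)
Lemma mink_II_nuv fr Z :
  mink (II fr (Ztc fr Z) (Ztc fr Z)) (nuv fr Z) = vnorm (II fr (Ztc fr Z) (Ztc fr Z)).
Proof.
unfold nuv; cbv zeta; set (h := II fr (Ztc fr Z) (Ztc fr Z)).
replace (mink h (vscal (/ vnorm h) h)) with (/ vnorm h * mink h h)
  by (unfold mink, vscal; cbn; ring).
unfold vnorm; destruct (Rle_lt_dec (mink h h) 0) as [Hle | Hlt].
- rewrite (sqrt_neg_0 _ Hle), Rinv_0; ring.
- assert (Hs : 0 < sqrt (mink h h)) by (apply sqrt_lt_R0; exact Hlt).
  rewrite <- (sqrt_sqrt (mink h h)) at 2 by lra; field; lra.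
Qed.

Lemma mink_nproj fr X Y : gdet fr <> 0 ->
  mink (nproj fr X) (nproj fr Y)
  = mink X Y - (fst (tcoord fr Y) * mink X (fu fr) + snd (tcoord fr Y) * mink X (fv fr)).
Proof.
destruct fr as [a b c d e]; unfold gdet, gE, gF, gG; cbn; intros HD.
unfold nproj, tproj, tcoord, raise, tang, vsub, vadd, vscal, gdet, gE, gF, gG, mink; cbn.
field; exact HD.
Qed.

(* Stdlib states these rules for [(f + g)%F] etc., which [apply] does not unify with
   lambda terms. *)
Section ProductRule.
Variables (f g : R -> R) (x df dg : R).
Hypotheses (Hf : derivable_pt_lim f x df) (Hg : derivable_pt_lim g x dg).

Lemma derivable_pt_lim_add : derivable_pt_lim (fun t => f t + g t) x (df + dg).
Proof. exact (derivable_pt_lim_plus f g x df dg Hf Hg). Qed.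

Lemma derivable_pt_lim_sub : derivable_pt_lim (fun t => f t - g t) x (df - dg).
Proof. exact (derivable_pt_lim_minus f g x df dg Hf Hg). Qed.

Lemma derivable_pt_lim_mul : derivable_pt_lim (fun t => f t * g t) x (df * g x + f x * dg).
Proof. exact (derivable_pt_lim_mult f g x df dg Hf Hg). Qed.

Lemma derivable_pt_lim_neg : derivable_pt_lim (fun t => - f t) x (- df).
Proof. exact (derivable_pt_lim_opp f x df Hf). Qed.

End ProductRule.

Lemma derivable_pt_lim_eq_r f x l l' : derivable_pt_lim f x l -> l = l' -> derivable_pt_lim f x l'.
Proof. now intros H <-. Qed.

Ltac product_rule :=
  repeat first [ eassumption
               | apply derivable_pt_lim_add | apply derivable_pt_lim_sub
               | apply derivable_pt_lim_mul | apply derivable_pt_lim_neg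
               | apply derivable_pt_lim_const ].

Lemma derivable_pt_lim_mink (a b : R -> V4) s a' b' :
  vderiv a s a' -> vderiv b s b' ->
  derivable_pt_lim (fun t => mink (a t) (b t)) s (mink a' (b s) + mink (a s) b').
Proof.
intros (A1 & A2 & A3 & A4) (B1 & B2 & B3 & B4); unfold mink.
eapply derivable_pt_lim_eq_r; [product_rule |]. cbv beta; ring.
Qed.

(* [gdet * <Z^T, Z^T>] with the denominator cleared (see [zquad_tproj]), so that it can be
   differentiated by the product rule. *)
Definition zquad (X Y Z : V4) : R :=
  mink Y Y * mink Z X * mink Z X - 2 * mink X Y * mink Z X * mink Z Y
  + mink X X * mink Z Y * mink Z Y.

Definition zquad_deriv (X Y Z X' Y' : V4) : R :=
  2 * mink Y' Y * mink Z X * mink Z X + 2 * mink Y Y * mink Z X * mink X' Z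
  - 2 * ((mink X' Y + mink Y' X) * mink Z X * mink Z Y
         + mink X Y * mink X' Z * mink Z Y + mink X Y * mink Z X * mink Y' Z)
  + 2 * mink X' X * mink Z Y * mink Z Y + 2 * mink X X * mink Z Y * mink Y' Z.

Lemma derivable_pt_lim_zquad (X Y : R -> V4) Z s X' Y' :
  vderiv X s X' -> vderiv Y s Y' ->
  derivable_pt_lim (fun t => zquad (X t) (Y t) Z) s (zquad_deriv (X s) (Y s) Z X' Y').
Proof.
intros HX HY.
assert (HZ : vderiv (fun _ => Z) s vzero).
{ repeat split; apply derivable_pt_lim_const. }
pose proof (derivable_pt_lim_mink _ _ s _ _ HX HX).
pose proof (derivable_pt_lim_mink _ _ s _ _ HX HY).
pose proof (derivable_pt_lim_mink _ _ s _ _ HY HY).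
pose proof (derivable_pt_lim_mink _ _ s _ _ HZ HX).
pose proof (derivable_pt_lim_mink _ _ s _ _ HZ HY).
unfold zquad; eapply derivable_pt_lim_eq_r; [product_rule |].
cbv beta; unfold zquad_deriv, mink, vzero; cbn; ring.
Qed.

Lemma zquad_tproj fr Z : gdet fr <> 0 ->
  zquad (fu fr) (fv fr) Z = gdet fr * mink (tproj fr Z) (tproj fr Z).
Proof.
intros HD; unfold tproj; rewrite mink_tang.
unfold zquad, sform, metric, tcoord, raise; cbn; unfold gdet, gE, gF, gG in *.
field; exact HD.
Qed.

(* Product rule for [zquad = gdet * <Z^T, Z^T>]: the extra term in the proof is
   [<Z^T, Z^T>] times the derivative of [gdet]. *)
Lemma zquad_deriv_nproj fr Z X' Y' : gdet fr <> 0 -> zquad (fu fr) (fv fr) Z = 0 ->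
  zquad_deriv (fu fr) (fv fr) Z X' Y'
  = 2 * gdet fr * (fst (tcoord fr Z) * mink (nproj fr X') (nproj fr Z)
                   + snd (tcoord fr Z) * mink (nproj fr Y') (nproj fr Z)).
Proof.
intros HD Hq.
match goal with |- _ = ?rhs =>
  transitivity (rhs + zquad (fu fr) (fv fr) Z / gdet fr
    * (2 * mink X' (fu fr) * gG fr + 2 * gE fr * mink Y' (fv fr)
       - 2 * gF fr * (mink X' (fv fr) + mink Y' (fu fr)))) end.
- rewrite !mink_nproj by exact HD.
  unfold zquad_deriv, zquad, tcoord, raise; cbn; unfold gdet, gE, gF, gG in *.
  field; exact HD.
- rewrite Hq; unfold Rdiv; ring.
Qed.

Lemma derivable_pt_lim_locally_zero (f : R -> R) x eps :
  0 < eps -> (forall s, Rabs (s - x) < eps -> f s = 0) -> derivable_pt_lim f x 0.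
Proof.
intros He Hz e He'; exists (mkposreal eps He); intros h Hh Hlt; cbn in Hlt.
rewrite (Hz (x + h)) by (replace (x + h - x) with h by ring; exact Hlt).
rewrite (Hz x) by (rewrite Rminus_diag, Rabs_R0; exact He).
replace ((0 - 0) / h - 0) with 0 by (field; exact Hh).
rewrite Rabs_R0; exact He'.
Qed.

Lemma zquad_locally_zero_kernel fr Z (X Y : R -> V4) s X' Y' eps :
  gdet fr <> 0 -> X s = fu fr -> Y s = fv fr ->
  vderiv X s X' -> vderiv Y s Y' -> 0 < eps ->
  (forall t, Rabs (t - s) < eps -> zquad (X t) (Y t) Z = 0) ->
  fst (Ztc fr Z) * mink (nproj fr X') (Zperp fr Z)
  + snd (Ztc fr Z) * mink (nproj fr Y') (Zperp fr Z) = 0.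
Proof.
intros HD HXs HYs HX HY He Hz.
assert (Hd : zquad_deriv (X s) (Y s) Z X' Y' = 0).
{ apply (uniqueness_limite (fun t => zquad (X t) (Y t) Z) s).
  - exact (derivable_pt_lim_zquad X Y Z s X' Y' HX HY).
  - exact (derivable_pt_lim_locally_zero _ s eps He Hz). }
assert (Hq : zquad (fu fr) (fv fr) Z = 0).
{ rewrite <- HXs, <- HYs; apply Hz; rewrite Rminus_diag, Rabs_R0; exact He. }
rewrite HXs, HYs, zquad_deriv_nproj in Hd by assumption.
apply Rmult_integral in Hd as [Hd | Hd]; [| exact Hd].
exfalso; apply HD; lra.
Qed.

Section CanonicalNullDirection.

Variables (U : R -> R -> Prop) (fu_ fv_ fuu_ fuv_ fvv_ : R -> R -> V4) (Z : V4).

Let frame u v := mkFrame (fu_ u v) (fv_ u v) (fuu_ u v) (fuv_ u v) (fvv_ u v).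

Hypotheses (HU : open2 U)
  (Hfuu : is_pd_u U fu_ fuu_) (Hfuv : is_pd_v U fu_ fuv_)
  (Hfvu : is_pd_u U fv_ fuv_) (Hfvv : is_pd_v U fv_ fvv_)
  (Htimelike : forall u v, U u v -> timelike_at (frame u v))
  (Hnull : forall u v, U u v -> mink (tproj (frame u v) Z) (tproj (frame u v) Z) = 0).

Lemma gdet_frame_neq0 u v : U u v -> gdet (frame u v) <> 0.
Proof. intros Huv; exact (Rlt_not_eq _ _ (Htimelike u v Huv)). Qed.

Lemma zquad_frame_eq0 u v : U u v -> zquad (fu_ u v) (fv_ u v) Z = 0.
Proof.
intros Huv; change (zquad (fu (frame u v)) (fv (frame u v)) Z = 0).
rewrite zquad_tproj by exact (gdet_frame_neq0 u v Huv).
rewrite Hnull by exact Huv; ring.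
Qed.

Lemma second_form_Zperp_Ztc u v : U u v ->
  let fr := frame u v in
  let b := second_form fr (Zperp fr Z) in
  sform b (Ztc fr Z) (1, 0) = 0 /\ sform b (Ztc fr Z) (0, 1) = 0.
Proof.
intros Huv fr b.
destruct (HU u v Huv) as (eps & He & Hball).
assert (Hv0 : Rabs (v - v) < eps) by (rewrite Rminus_diag, Rabs_R0; exact He).
assert (Hu0 : Rabs (u - u) < eps) by (rewrite Rminus_diag, Rabs_R0; exact He).
rewrite sform_1_0, sform_0_1; split.
- refine (zquad_locally_zero_kernel fr Z (fun t => fu_ t v) (fun t => fv_ t v) u _ _ eps
            (gdet_frame_neq0 u v Huv) eq_refl eq_refl (Hfuu u v Huv) (Hfvu u v Huv) He _).
  intros t Ht; apply zquad_frame_eq0, Hball; assumption.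
- refine (zquad_locally_zero_kernel fr Z (fun t => fu_ u t) (fun t => fv_ u t) v _ _ eps
            (gdet_frame_neq0 u v Huv) eq_refl eq_refl (Hfuv u v Huv) (Hfvv u v Huv) He _).
  intros t Ht; apply zquad_frame_eq0, Hball; assumption.
Qed.

End CanonicalNullDirection.

Theorem mainTheorem13
  (U : R -> R -> Prop) (f fu_ fv_ fuu_ fuv_ fvv_ : R -> R -> V4) (Z : V4) :
  open2 U ->
  is_pd_u U f fu_ -> is_pd_v U f fv_ ->
  is_pd_u U fu_ fuu_ -> is_pd_v U fu_ fuv_ ->
  is_pd_u U fv_ fuv_ -> is_pd_v U fv_ fvv_ ->
  (* M is timelike *)
  (forall u v, U u v ->
     timelike_at (mkFrame (fu_ u v) (fv_ u v) (fuu_ u v) (fuv_ u v) (fvv_ u v))) ->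
  (* Z constant unit spacelike *)
  mink Z Z = 1 ->
  (* canonical null direction: Z^T lightlike everywhere *)
  (forall u v, U u v ->
     let fr := mkFrame (fu_ u v) (fv_ u v) (fuu_ u v) (fuv_ u v) (fvv_ u v) in
     tproj fr Z <> vzero /\ mink (tproj fr Z) (tproj fr Z) = 0) ->
  (* II(Z^T,Z^T) <> 0 everywhere *)
  (forall u v, U u v ->
     let fr := mkFrame (fu_ u v) (fv_ u v) (fuu_ u v) (fuv_ u v) (fvv_ u v) in
     II fr (Ztc fr Z) (Ztc fr Z) <> vzero) ->
  forall u v, U u v ->
  let fr := mkFrame (fu_ u v) (fv_ u v) (fuu_ u v) (fuv_ u v) (fvv_ u v) in
  (* W: the lightlike tangent vector with <Z^T, W> = -1 *)
  forall w : R * R,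
    tang fr w <> vzero ->
    mink (tang fr w) (tang fr w) = 0 ->
    mink (tproj fr Z) (tang fr w) = -1 ->
    KN fr Z w = acoef fr Z w * vnorm (II fr (Ztc fr Z) (Ztc fr Z)).
Proof.
(* Only nondegeneracy of the metric, nullity of Z^T and <Z^T, W> = -1 enter. *)
intros HU _ _ Hfuu Hfuv Hfvu Hfvv Htimelike _ Hnull _ u v Huv fr w _ _ HZW.
assert (Hnull' := fun u v H => proj2 (Hnull u v H)); clear Hnull.
assert (Hg : sdet (metric fr) <> 0) by exact (Rlt_not_eq _ _ (Htimelike u v Huv)).
assert (HTT : sform (metric fr) (Ztc fr Z) (Ztc fr Z) = 0)
  by (rewrite <- mink_tang; exact (Hnull' u v Huv)).
assert (HTW : sform (metric fr) (Ztc fr Z) w = -1) by (rewrite <- mink_tang; exact HZW).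
destruct (second_form_Zperp_Ztc U fu_ fv_ fuu_ fuv_ fvv_ Z HU Hfuu Hfuv Hfvu Hfvv
            Htimelike Hnull' u v Huv) as [Hk1 Hk2].
unfold KN, acoef; cbv zeta.
rewrite mink_tang, !shape_sendo, <- mink_II_nuv, !mink_II.
apply commutator_rank_one; [exact Hg | exact HTT | exact HTW |].
exact (sform_rank_one _ _ _ _ HTT HTW Hk1 Hk2).
Qed.
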